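(* For every $m\ge0$, the expected number of internal vertices of a free triangulation of an $(m+2)$-gon is \[ \frac{1}{Z_m}\sum_{n\ge0} n\,\phi_{n,m}\,\alpha^{-n} = \frac{(m+1)(2m+1)}{3}. \]
   Context: $\phi_{n,m}=\frac{2^{n+1}(2m+1)!(2m+3n)!}{m!^2 n!(2m+2n+2)!}$ is the number of rooted type II triangulations (multiple edges allowed, no loops) of a disc with $m+2$ boundary vertices and $n$ internal vertices, with the convention $\phi_{0,0}=1$. Let $\alpha=27/2$ and $Z_m=\sum_n\phi_{n,m}\alpha^{-n}=\frac{(2m)!}{m!(m+2)!}(9/4)^{m+1}$. The free triangulation of an $(m+2)$-gon has law $\mu_m$, which gives each rooted triangulation of the $(m+2)$-gon with $n$ internal vertices weight $\alpha^{-n}/Z_m$. *)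

From Stdlib Require Import Reals Arith Factorial.
From Coquelicot Require Import Coquelicot.
Open Scope R_scope.

(* phi n m : number of rooted type II triangulations of an (m+2)-gon with
   n internal vertices, given by the closed formula of the paper. *)
Definition phi (n m : nat) : R :=
  2 ^ (n + 1) * INR (fact (2 * m + 1)) * INR (fact (2 * m + 3 * n))
  / (INR (fact m) ^ 2 * INR (fact n) * INR (fact (2 * m + 2 * n + 2))).

Definition alpha : R := 27 / 2.

Definition weight (n m : nat) : R := phi n m / alpha ^ n.

Definition Zm (m : nat) : R := Series (fun n => weight n m).

From Stdlib Require Import Reals Lra Lia Factorial.
From Coquelicot Require Import Coquelicot.
Open Scope R_scope.

(* Write [w n m] for [weight n m], [Z m] for [Zm m] and [T m] for [sum_n n w n m].
   Both ratios [w (n+1) m / w n m] and [w n (m+1) / w n m] are rational, so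
   Zeilberger's algorithm produces telescoping certificates; summing them over [n]
   gives [T m = a m Z m - b m Z (m+1)] and a three-term linear recurrence for [Z].
   That recurrence has one solution with [Z (m+1) / Z m = 9 (2m+1) / (2 (m+3))] and
   a second one larger by a factor of order [m 4^m]; positivity of [T m] gives
   [Z (m+1) <= (a m / b m) Z m], which rules out the second.  Then
   [T m / Z m = a m - b m * 9 (2m+1) / (2 (m+3)) = (m+1)(2m+1)/3]. *)

Lemma INR_fact_succ k : INR (fact (S k)) = (INR k + 1) * INR (fact k).
Proof. rewrite fact_simpl, mult_INR, S_INR; ring. Qed.

Lemma INR_fact_add2 k :
  INR (fact (k + 2)) = (INR k + 1) * (INR k + 2) * INR (fact k).
Proof. replace (k + 2)%nat with (S (S k)) by lia; rewrite !INR_fact_succ, S_INR; ring. Qed.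

Lemma INR_fact_add3 k :
  INR (fact (k + 3)) = (INR k + 1) * (INR k + 2) * (INR k + 3) * INR (fact k).
Proof.
  replace (k + 3)%nat with (S (S (S k))) by lia; rewrite !INR_fact_succ, !S_INR; ring.
Qed.

Lemma sum_n_telescoping (G : nat -> R) N :
  sum_n (fun k => G (S k) - G k) N = G (S N) - G O.
Proof.
  induction N as [|N IH]; [now rewrite sum_O|].
  rewrite sum_Sn, IH; cbn; ring.
Qed.

Lemma sum_n_le_compat (a b : nat -> R) N :
  (forall n, a n <= b n) -> sum_n a N <= sum_n b N.
Proof. apply sum_n_m_le. Qed.

Lemma is_lim_seq_telescoping (G : nat -> R) s :
  is_series (fun k => G (S k) - G k) s -> is_lim_seq G (s + G O).
Proof.
  intros Hs; apply is_lim_seq_incr_1.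
  apply is_lim_seq_ext with (fun N => sum_n (fun k => G (S k) - G k) N + G O).
  - intros N; rewrite sum_n_telescoping; ring.
  - apply (is_lim_seq_plus' _ _ s (G O) Hs), is_lim_seq_const.
Qed.

Lemma sum_n_m_ge_const (a : nat -> R) c n m :
  (forall k, (n <= k <= m)%nat -> c <= a k) -> INR (S m - n) * c <= sum_n_m a n m.
Proof.
  intros Hc; rewrite <- sum_n_m_const.
  rewrite (sum_n_m_ext_loc _ (fun k => Rmin c (a k))).
  - apply sum_n_m_le; intros k; apply Rmin_r.
  - intros k Hk; symmetry; apply Rmin_left, Hc, Hk.
Qed.

(* A summable sequence cannot dominate a multiple of the harmonic series:
   the Cauchy block [K+1, 2K] would carry mass at least [d / 2]. *)
Lemma not_ex_series_of_inv_lower_bound (x : nat -> R) d N :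
  0 < d -> (forall n, (N <= n)%nat -> d <= INR n * x n) -> ~ ex_series x.
Proof.
  intros Hd Hlow Hex.
  destruct (Cauchy_ex_series _ Hex (mkposreal (d / 2) ltac:(lra))) as [N0 HN0].
  set (K := S (N + N0)).
  assert (HK : 0 < INR K) by (apply lt_0_INR; unfold K; lia).
  assert (Hblock : INR (S (K + K) - S K) * (d / (2 * INR K)) <= sum_n_m x (S K) (K + K)).
  { apply sum_n_m_ge_const; intros k Hk.
    assert (Hk0 : INR K < INR k) by (apply lt_INR; lia).
    assert (Hk1 : INR k <= 2 * INR K).
    { replace (2 * INR K) with (INR (K + K)) by (rewrite plus_INR; ring).
      apply le_INR; lia. }
    specialize (Hlow k ltac:(unfold K in *; lia)).
    apply Rle_trans with (d / INR k).
    - apply Rmult_le_compat_l; [lra|]; apply Rinv_le_contravar; lra.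
    - apply Rle_div_l; lra. }
  replace (S (K + K) - S K)%nat with K in Hblock by lia.
  replace (INR K * (d / (2 * INR K))) with (d / 2) in Hblock by (field; lra).
  specialize (HN0 (S K) (K + K)%nat ltac:(unfold K; lia) ltac:(unfold K; lia)).
  change (Rabs (sum_n_m x (S K) (K + K)%nat) < d / 2) in HN0.
  pose proof (Rle_abs (sum_n_m x (S K) (K + K)%nat)); lra.
Qed.

Lemma ex_series_of_bounded_sum_n (a : nat -> R) M :
  (forall n, 0 <= a n) -> (forall N, sum_n a N <= M) -> ex_series a.
Proof.
  intros Ha HM.
  destruct (growing_cv (sum_n a)) as [l Hl].
  - intros n; rewrite sum_Sn; specialize (Ha (S n)); cbn; lra.
  - exists M; intros x [N ->]; apply HM.
  - exists l; now apply is_lim_seq_Reals.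
Qed.

Lemma sum_n_le_Series (a : nat -> R) N :
  (forall n, 0 <= a n) -> ex_series a -> sum_n a N <= Series a.
Proof.
  intros Ha Hex.
  apply (is_lim_seq_incr_compare (sum_n a)); [exact (Series_correct _ Hex)|].
  intros n; rewrite sum_Sn; specialize (Ha (S n)); cbn; lra.
Qed.

Lemma sum_f_R0_term_le (f : nat -> R) N k :
  (forall i, 0 <= f i) -> (k <= N)%nat -> f k <= sum_f_R0 f N.
Proof.
  intros Hf; induction N as [|N IH]; intros Hk.
  - inversion Hk; cbn; lra.
  - cbn; destruct (Nat.eq_dec k (S N)) as [->|Hne].
    + pose proof (cond_pos_sum f N Hf); lra.
    + pose proof (IH ltac:(lia)); specialize (Hf (S N)); lra.
Qed.

Lemma fact_mul_pow_le t N k : 0 <= t -> (k <= N)%nat ->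
  INR (fact N) * t ^ k <= (1 + t) ^ N * (INR (fact k) * INR (fact (N - k))).
Proof.
  intros Ht Hk.
  pose proof (INR_fact_lt_0 k); pose proof (INR_fact_lt_0 (N - k)).
  assert (Hterm : forall i, 0 <= Binomial.C N i * t ^ i * 1 ^ (N - i)).
  { intros i; unfold Binomial.C; rewrite pow1.
    pose proof (INR_fact_lt_0 N); pose proof (INR_fact_lt_0 i);
      pose proof (INR_fact_lt_0 (N - i)); pose proof (pow_le t i Ht).
    apply Rmult_le_pos; [apply Rmult_le_pos|]; try lra.
    apply Rlt_le, Rdiv_lt_0_compat; nra. }
  pose proof (sum_f_R0_term_le _ N k Hterm Hk) as Hle.
  rewrite <- binomial, Rplus_comm in Hle; unfold Binomial.C in Hle; rewrite pow1 in Hle.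
  replace (INR (fact N) * t ^ k) with
    (INR (fact N) / (INR (fact k) * INR (fact (N - k))) * t ^ k * 1
     * (INR (fact k) * INR (fact (N - k)))) by (field; lra).
  apply Rmult_le_compat_r; nra.
Qed.

Lemma eq0_of_mul_INR_bounded c M : (forall m, Rabs c * INR m <= M) -> c = 0.
Proof.
  intros HM; destruct (Req_dec c 0) as [|Hc]; [assumption|exfalso].
  pose proof (Rabs_pos_lt c Hc) as Habs.
  destruct (INR_unbounded (M / Rabs c)) as [m Hm].
  specialize (HM m); apply Rgt_lt, (Rmult_lt_compat_l (Rabs c)) in Hm; [|exact Habs].
  replace (Rabs c * (M / Rabs c)) with M in Hm by (field; lra); lra.
Qed.

(* Non-constant solutions of the difference equation grow like [4^m (m + 2)],
   which the growth bound forbids. *)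
Lemma constant_of_growth_le_4 (u : nat -> R) :
  (forall m, 0 <= u m) -> (forall m, u (S m) <= 4 * u m) ->
  (forall m, u (S (S m)) - u (S m) = 4 * (INR m + 3) / (INR m + 2) * (u (S m) - u m)) ->
  forall m, u (S m) = u m.
Proof.
  intros Hnonneg Hgrowth Hdiff.
  set (e m := u (S m) - u m).
  assert (He : forall m, e m = e O * 4 ^ m * (INR m + 2) / 2).
  { induction m as [|m IH]; [cbn; field|].
    unfold e at 1; rewrite Hdiff; fold (e m); rewrite IH, S_INR; cbn.
    pose proof (pos_INR m); field; lra. }
  assert (Hpow : forall m, u m <= 4 ^ m * u O).
  { induction m as [|m IH]; [cbn; lra|].
    pose proof (Hgrowth m); cbn; lra. }
  assert (He0 : e O = 0).
  { apply (eq0_of_mul_INR_bounded _ (8 * u O)); intros m.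
    assert (H4m : 0 < 4 ^ m) by (apply pow_lt; lra).
    assert (Hem : Rabs (e m) <= 4 ^ m * (4 * u O)).
    { unfold e; pose proof (Hnonneg m); pose proof (Hgrowth m); pose proof (Hpow m).
      pose proof (Hnonneg (S m)); pose proof (Rmult_le_pos _ _ (Rlt_le _ _ H4m) (Hnonneg O)).
      apply Rabs_le; lra. }
    rewrite He, Rabs_div, !Rabs_mult, (Rabs_right (4 ^ m)), (Rabs_right (INR m + 2)),
      (Rabs_right 2) in Hem by (pose proof (pos_INR m); lra).
    pose proof (pos_INR m); pose proof (Rabs_pos (e O)).
    pose proof (Rmult_le_pos _ _ (Rabs_pos (e O)) (Rlt_le _ _ H4m)).
    apply Rmult_le_reg_l with (4 ^ m); [exact H4m|]; nra. }
  intros m; pose proof (He m) as Hm; rewrite He0 in Hm.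
  unfold e in Hm; lra.
Qed.

Ltac fact_positivity n m :=
  pose proof (pos_INR n); pose proof (pos_INR m);
  pose proof (INR_fact_lt_0 n); pose proof (INR_fact_lt_0 m);
  pose proof (INR_fact_lt_0 (2 * m + 1)); pose proof (INR_fact_lt_0 (2 * m + 3 * n));
  pose proof (INR_fact_lt_0 (2 * m + 2 * n + 2));
  assert (0 < (27 / 2) ^ n) by (apply pow_lt; lra).

Lemma weight_pos n m : 0 < weight n m.
Proof.
  unfold weight, phi, alpha; fact_positivity n m.
  assert (0 < 2 ^ (n + 1)) by (apply pow_lt; lra).
  assert (0 < INR (fact m) ^ 2) by (apply pow_lt; lra).
  apply Rdiv_lt_0_compat; [|lra].
  apply Rdiv_lt_0_compat; repeat apply Rmult_lt_0_compat; lra.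
Qed.

Lemma weight_succ_l n m : weight (S n) m = weight n m *
  (4 * (2 * INR m + 3 * INR n + 1) * (2 * INR m + 3 * INR n + 2) * (2 * INR m + 3 * INR n + 3))
  / (27 * (INR n + 1) * (2 * INR m + 2 * INR n + 3) * (2 * INR m + 2 * INR n + 4)).
Proof.
  unfold weight, phi, alpha.
  replace (2 * m + 3 * S n)%nat with (2 * m + 3 * n + 3)%nat by lia.
  replace (2 * m + 2 * S n + 2)%nat with (2 * m + 2 * n + 2 + 2)%nat by lia.
  replace (S n + 1)%nat with (S (n + 1)) by lia.
  rewrite <- (tech_pow_Rmult 2 (n + 1)), <- (tech_pow_Rmult _ n).
  rewrite INR_fact_add3, INR_fact_add2, INR_fact_succ, !plus_INR, !mult_INR.
  simpl (INR 2); simpl (INR 3).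
  fact_positivity n m. field; repeat split; lra.
Qed.

Lemma weight_succ_r n m : weight n (S m) = weight n m *
  ((2 * INR m + 2) * (2 * INR m + 3) * (2 * INR m + 3 * INR n + 1) * (2 * INR m + 3 * INR n + 2))
  / ((INR m + 1) ^ 2 * (2 * INR m + 2 * INR n + 3) * (2 * INR m + 2 * INR n + 4)).
Proof.
  unfold weight, phi, alpha.
  replace (2 * S m + 1)%nat with (2 * m + 1 + 2)%nat by lia.
  replace (2 * S m + 3 * n)%nat with (2 * m + 3 * n + 2)%nat by lia.
  replace (2 * S m + 2 * n + 2)%nat with (2 * m + 2 * n + 2 + 2)%nat by lia.
  rewrite (INR_fact_add2 (2 * m + 1)), (INR_fact_add2 (2 * m + 3 * n)),
    (INR_fact_add2 (2 * m + 2 * n + 2)), INR_fact_succ, !plus_INR, !mult_INR.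
  simpl (INR 1); simpl (INR 2); simpl (INR 3).
  fact_positivity n m. field; repeat split; lra.
Qed.

Lemma INR_fact_2m3n_le n m :
  INR (fact (2 * m + 3 * n)) * (4 / 27) ^ n
  <= (9 / 4) ^ m * (INR (fact n) * INR (fact (2 * m + 2 * n))).
Proof.
  assert (Hpow : (3 / 2) ^ (2 * m + 3 * n) * (8 / 27) ^ n = (9 / 4) ^ m).
  { rewrite pow_add, !pow_mult, Rmult_assoc, <- Rpow_mult_distr.
    replace ((3 / 2) ^ 3 * (8 / 27)) with 1 by (cbn; field).
    rewrite pow1, Rmult_1_r; f_equal; cbn; field. }
  pose proof (fact_mul_pow_le (1 / 2) (2 * m + 3 * n) n ltac:(lra) ltac:(lia)) as Hle.
  replace (2 * m + 3 * n - n)%nat with (2 * m + 2 * n)%nat in Hle by lia.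
  replace (1 + 1 / 2) with (3 / 2) in Hle by field.
  apply Rmult_le_compat_r with (r := (8 / 27) ^ n) in Hle; [|apply pow_le; lra].
  replace (4 / 27) with (1 / 2 * (8 / 27)) by field.
  rewrite Rpow_mult_distr, <- Hpow; lra.
Qed.

Lemma weight_le_inv_quadratic m :
  exists K, forall n, weight n m <= K / ((INR n + 1) * (INR n + 2)).
Proof.
  exists (2 * INR (fact (2 * m + 1)) / INR (fact m) ^ 2 * (9 / 4) ^ m); intros n.
  pose proof (INR_fact_2m3n_le n m) as Hle.
  fact_positivity n m.
  pose proof (INR_fact_lt_0 (2 * m + 2 * n)).
  assert (0 < (4 / 27) ^ n) by (apply pow_lt; lra).
  assert (0 < (9 / 4) ^ m) by (apply pow_lt; lra).
  assert (0 < INR (fact m) ^ 2) by (apply pow_lt; lra).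
  assert (H2n : 2 ^ n = (4 / 27) ^ n * (27 / 2) ^ n).
  { rewrite <- Rpow_mult_distr; f_equal; field. }
  set (A := 2 * INR m + 2 * INR n + 1); set (B := 2 * INR m + 2 * INR n + 2).
  assert (Hw : weight n m = 2 * INR (fact (2 * m + 1)) / INR (fact m) ^ 2
      * (INR (fact (2 * m + 3 * n)) * (4 / 27) ^ n / (INR (fact n) * INR (fact (2 * m + 2 * n))))
      / (A * B)).
  { unfold weight, phi, alpha, A, B.
    rewrite (INR_fact_add2 (2 * m + 2 * n)), pow_add, H2n, !plus_INR, !mult_INR.
    cbn [INR]; field; repeat split; lra. }
  assert (HAB : (INR n + 1) * (INR n + 2) <= A * B) by (unfold A, B; nra).
  assert (HQ : INR (fact (2 * m + 3 * n)) * (4 / 27) ^ n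
               / (INR (fact n) * INR (fact (2 * m + 2 * n))) <= (9 / 4) ^ m)
    by (apply Rle_div_l; [nra|lra]).
  set (P := 2 * INR (fact (2 * m + 1)) / INR (fact m) ^ 2) in *.
  assert (HP : 0 < P) by (apply Rdiv_lt_0_compat; lra).
  rewrite Hw; unfold Rdiv.
  apply Rle_trans with (P * (9 / 4) ^ m * / (A * B)).
  - apply Rmult_le_compat_r; [apply Rlt_le, Rinv_0_lt_compat; nra|].
    apply Rmult_le_compat_l; lra.
  - apply Rmult_le_compat_l; [nra|].
    apply Rinv_le_contravar; nra.
Qed.

Lemma ex_series_weight m : ex_series (fun n => weight n m).
Proof.
  destruct (weight_le_inv_quadratic m) as [K HK].
  assert (HK0 : 0 <= K).
  { specialize (HK O); pose proof (weight_pos O m); cbn in HK.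
    apply Rmult_le_reg_r with (/ ((0 + 1) * (0 + 2))); [lra|]; lra. }
  apply ex_series_of_bounded_sum_n with K; [intros n; apply Rlt_le, weight_pos|].
  intros N; eapply Rle_trans.
  - apply sum_n_le_compat with (b := fun k => - K / (INR (S k) + 1) - - K / (INR k + 1)).
    intros k; rewrite S_INR; pose proof (pos_INR k).
    replace (- K / (INR k + 1 + 1) - - K / (INR k + 1))
      with (K / ((INR k + 1) * (INR k + 2))) by (field; lra).
    apply HK.
  - rewrite (sum_n_telescoping (fun k => - K / (INR k + 1))).
    pose proof (pos_INR (S N)).
    replace (- K / (INR (S N) + 1) - - K / (INR 0 + 1)) with (K - K / (INR (S N) + 1))
      by (change (INR 0) with 0; field; lra).
    assert (0 <= K / (INR (S N) + 1)) by (apply Rle_div_r; lra).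
    lra.
Qed.

Definition first_moment_certificate (m n : nat) : R :=
  - INR n * (2 * INR n + (8 * INR m + 9) / 3) * weight n m.

Lemma first_moment_certificate_step m n :
  INR n * weight n m - 4 * (INR m + 1) * (2 * INR m + 1) / 9 * weight n m
    + 2 * (INR m + 1) * (INR m + 3) / 81 * weight n (S m)
  = first_moment_certificate m (S n) - first_moment_certificate m n.
Proof.
  unfold first_moment_certificate; rewrite weight_succ_l, weight_succ_r, S_INR.
  pose proof (pos_INR n); pose proof (pos_INR m).
  field; repeat split; lra.
Qed.

Lemma first_moment_certificate_nonpos m n : first_moment_certificate m n <= 0.
Proof.
  unfold first_moment_certificate.
  pose proof (pos_INR n); pose proof (pos_INR m); pose proof (weight_pos n m).
  assert (0 <= INR n * (2 * INR n + (8 * INR m + 9) / 3)) by nra.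
  nra.
Qed.

Lemma ex_series_INR_mul_weight m : ex_series (fun n => INR n * weight n m).
Proof.
  set (a := 4 * (INR m + 1) * (2 * INR m + 1) / 9).
  set (G := first_moment_certificate m).
  assert (Ha : 0 <= a) by (unfold a; pose proof (pos_INR m); nra).
  apply ex_series_of_bounded_sum_n with (a * Zm m).
  { intros n; pose proof (pos_INR n); pose proof (weight_pos n m); nra. }
  intros N; apply Rle_trans with (sum_n (fun k => plus (G (S k) - G k) (mult a (weight k m))) N).
  - apply sum_n_le_compat; intros k.
    pose proof (first_moment_certificate_step m k) as Hstep.
    pose proof (weight_pos k (S m)); pose proof (pos_INR m).
    assert (0 <= 2 * (INR m + 1) * (INR m + 3) / 81 * weight k (S m)) by
      (apply Rmult_le_pos; [apply Rle_div_r|]; nra).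
    change (plus ?x ?y) with (x + y); change (mult ?x ?y) with (x * y).
    unfold G, a; lra.
  - rewrite sum_n_plus, (sum_n_mult_l (K := R_Ring)), sum_n_telescoping.
    change (plus ?x ?y) with (x + y); change (mult ?x ?y) with (x * y).
    pose proof (first_moment_certificate_nonpos m (S N)) as HG.
    assert (HG0 : G O = 0) by (unfold G, first_moment_certificate; cbn; ring).
    pose proof (sum_n_le_Series (fun n => weight n m) N
                  (fun n => Rlt_le _ _ (weight_pos n m)) (ex_series_weight m)) as Hpartial.
    rewrite HG0, Rminus_0_r, <- (Rplus_0_l (a * Zm m)).
    apply Rplus_le_compat; [exact HG|].
    apply Rmult_le_compat_l; [exact Ha|exact Hpartial].
Qed.

(* The boundary term [-G n], of order [n * (n * w n)], converges; a negative
   limit would make [n * w n] dominate a harmonic tail. *)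
Lemma Series_INR_mul_weight m :
  Series (fun n => INR n * weight n m)
  = 4 * (INR m + 1) * (2 * INR m + 1) / 9 * Zm m
    - 2 * (INR m + 1) * (INR m + 3) / 81 * Zm (S m).
Proof.
  set (a := 4 * (INR m + 1) * (2 * INR m + 1) / 9).
  set (b := 2 * (INR m + 1) * (INR m + 3) / 81).
  set (G := first_moment_certificate m).
  set (s := Series (fun n => INR n * weight n m) - a * Zm m + b * Zm (S m)).
  assert (Hs : is_series (fun k => G (S k) - G k) s).
  { eapply is_series_ext; [intros k; apply first_moment_certificate_step|].
    apply (is_series_plus _ _ _ _
      (is_series_minus _ _ _ _ (Series_correct _ (ex_series_INR_mul_weight m))
         (is_series_scal_l a _ _ (Series_correct _ (ex_series_weight m))))
      (is_series_scal_l b _ _ (Series_correct _ (ex_series_weight (S m))))). }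
  assert (HG : is_lim_seq G s).
  { replace s with (s + G O) by (unfold G, first_moment_certificate; cbn; ring).
    now apply is_lim_seq_telescoping. }
  assert (Hs_nonpos : s <= 0).
  { apply (is_lim_seq_le G (fun _ => 0) s 0); [apply first_moment_certificate_nonpos|exact HG|].
    apply is_lim_seq_const. }
  enough (s = 0) by (unfold s in *; lra).
  destruct (Rle_lt_or_eq _ _ Hs_nonpos) as [Hneg|]; [exfalso|assumption].
  set (c := (8 * INR m + 9) / 3).
  assert (Hc : 0 < c) by (unfold c; pose proof (pos_INR m); lra).
  apply is_lim_seq_spec in HG.
  destruct (HG (mkposreal (- s / 2) ltac:(lra))) as [N HN]; cbn in HN.
  apply (not_ex_series_of_inv_lower_bound (fun n => INR n * weight n m)
           (- s / (2 * (2 + c))) (S N)); [apply Rdiv_lt_0_compat; lra| |].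
  - intros n Hn.
    specialize (HN n ltac:(lia)); apply Rabs_def2 in HN as [HN _].
    unfold G, first_moment_certificate in HN; fold c in HN.
    assert (H1 : 1 <= INR n) by (apply (le_INR 1); lia).
    pose proof (weight_pos n m).
    assert (Hlin : 2 * INR n + c <= (2 + c) * INR n) by nra.
    apply Rle_div_l; [lra|].
    assert (0 <= INR n * weight n m) by nra.
    nra.
  - apply ex_series_INR_mul_weight.
Qed.

Definition recurrence_certificate (m n : nat) : R :=
  let x := INR n in let y := INR m in
  (2 * y + 3) / (4 * (y + 1) * (y + 2) * (y + 4)) * x
  * (27 * (40 * y ^ 3 + 190 * y ^ 2 + 287 * y + 128)
     + 81 * (26 * y ^ 2 + 79 * y + 62) * x + 972 * (y + 1) * x ^ 2)
  / ((x + y + 2) * (2 * x + 2 * y + 3) / 2) * weight n m.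

Lemma recurrence_certificate_step m n :
  weight n (S (S m))
    - 9 * (2 * INR m + 3) * (5 * INR m + 14) / (2 * (INR m + 2) * (INR m + 4)) * weight n (S m)
    + 81 * (2 * INR m + 1) * (2 * INR m + 3) / ((INR m + 2) * (INR m + 4)) * weight n m
  = recurrence_certificate m (S n) - recurrence_certificate m n.
Proof.
  unfold recurrence_certificate; rewrite !weight_succ_r, weight_succ_l, !S_INR.
  pose proof (pos_INR n); pose proof (pos_INR m).
  field; repeat split; lra.
Qed.

Lemma recurrence_certificate_bound m :
  exists C, forall n, 0 <= recurrence_certificate m n <= C * (INR n * weight n m).
Proof.
  set (y := INR m); pose proof (pos_INR m) as Hy; fold y in Hy.
  set (K := (2 * y + 3) / (4 * (y + 1) * (y + 2) * (y + 4))).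
  set (p0 := 27 * (40 * y ^ 3 + 190 * y ^ 2 + 287 * y + 128)).
  set (p1 := 81 * (26 * y ^ 2 + 79 * y + 62)).
  set (p2 := 972 * (y + 1)).
  assert (HK : 0 < K) by (unfold K; apply Rdiv_lt_0_compat; nra).
  assert (0 <= p0) by (unfold p0; nra).
  assert (0 <= p1) by (unfold p1; nra).
  assert (0 <= p2) by (unfold p2; nra).
  exists (K * (p0 + p1 + p2)); intros n.
  set (x := INR n); pose proof (pos_INR n) as Hx; fold x in Hx.
  pose proof (weight_pos n m) as Hw.
  set (D := (x + y + 2) * (2 * x + 2 * y + 3) / 2).
  assert (HD : (x + 1) ^ 2 <= D) by (unfold D; nra).
  set (P := p0 + p1 * x + p2 * x ^ 2).
  assert (HP : 0 <= P) by (unfold P; nra).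
  assert (HPD : P <= (p0 + p1 + p2) * D).
  { apply Rle_trans with ((p0 + p1 + p2) * (x + 1) ^ 2); [unfold P; nra|].
    apply Rmult_le_compat_l; lra. }
  assert (HQ : 0 <= P / D <= p0 + p1 + p2).
  { split; [apply Rle_div_r|apply Rle_div_l]; nra. }
  unfold recurrence_certificate; fold y x K p0 p1 p2 P D.
  replace (K * x * P / D * weight n m) with (K * x * weight n m * (P / D)) by (field; nra).
  assert (0 <= K * x * weight n m) by (apply Rmult_le_pos; nra).
  split; [nra|].
  replace (K * (p0 + p1 + p2) * (x * weight n m))
    with (K * x * weight n m * (p0 + p1 + p2)) by ring.
  apply Rmult_le_compat_l; lra.
Qed.

Lemma Zm_recurrence m :
  Zm (S (S m))
    - 9 * (2 * INR m + 3) * (5 * INR m + 14) / (2 * (INR m + 2) * (INR m + 4)) * Zm (S m)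
    + 81 * (2 * INR m + 1) * (2 * INR m + 3) / ((INR m + 2) * (INR m + 4)) * Zm m = 0.
Proof.
  set (c1 := 9 * (2 * INR m + 3) * (5 * INR m + 14) / (2 * (INR m + 2) * (INR m + 4))).
  set (c0 := 81 * (2 * INR m + 1) * (2 * INR m + 3) / ((INR m + 2) * (INR m + 4))).
  set (G := recurrence_certificate m).
  assert (Hs : is_series (fun k => G (S k) - G k) (Zm (S (S m)) - c1 * Zm (S m) + c0 * Zm m)).
  { eapply is_series_ext; [intros k; apply recurrence_certificate_step|].
    apply (is_series_plus _ _ _ _
      (is_series_minus _ _ _ _ (Series_correct _ (ex_series_weight (S (S m))))
         (is_series_scal_l c1 _ _ (Series_correct _ (ex_series_weight (S m)))))
      (is_series_scal_l c0 _ _ (Series_correct _ (ex_series_weight m)))). }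
  apply is_lim_seq_telescoping in Hs.
  replace (G O) with 0 in Hs
    by (unfold G, recurrence_certificate; change (INR 0) with 0; unfold Rdiv; ring).
  assert (H0 : is_lim_seq G 0).
  { destruct (recurrence_certificate_bound m) as [C HC].
    apply is_lim_seq_le_le with (fun _ => 0) (fun n => C * (INR n * weight n m));
      [exact HC|apply is_lim_seq_const|].
    replace (Finite 0) with (Rbar_mult C 0) by (cbn; f_equal; ring).
    apply is_lim_seq_scal_l, ex_series_lim_0, ex_series_INR_mul_weight. }
  rewrite Rplus_0_r in Hs.
  apply is_lim_seq_unique in Hs; apply is_lim_seq_unique in H0.
  rewrite Hs in H0; now injection H0.
Qed.

Lemma Zm_pos m : 0 < Zm m.
Proof.
  apply Rlt_le_trans with (sum_n (fun n => weight n m) O); [rewrite sum_O; apply weight_pos|].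
  apply sum_n_le_Series; [intros n; apply Rlt_le, weight_pos|apply ex_series_weight].
Qed.

Definition Zm_ratio (m : nat) : R := 9 * (2 * INR m + 1) / (2 * (INR m + 3)).

Fixpoint Zm_ratio_prod (m : nat) : R :=
  match m with O => 1 | S k => Zm_ratio k * Zm_ratio_prod k end.

Lemma Zm_ratio_pos m : 0 < Zm_ratio m.
Proof. unfold Zm_ratio; pose proof (pos_INR m); apply Rdiv_lt_0_compat; lra. Qed.

Lemma Zm_ratio_prod_pos m : 0 < Zm_ratio_prod m.
Proof. induction m as [|m IH]; cbn; [lra|]; pose proof (Zm_ratio_pos m); nra. Qed.

Lemma Zm_succ_le m : Zm (S m) <= 4 * Zm_ratio m * Zm m.
Proof.
  pose proof (Series_INR_mul_weight m) as HT.
  assert (HT0 : 0 <= Series (fun n => INR n * weight n m)).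
  { eapply Rle_trans; [|apply (sum_n_le_Series _ O)].
    - rewrite sum_O; cbn; lra.
    - intros n; pose proof (pos_INR n); pose proof (weight_pos n m); nra.
    - apply ex_series_INR_mul_weight. }
  pose proof (pos_INR m); pose proof (Zm_pos m); pose proof (Zm_pos (S m)).
  unfold Zm_ratio.
  replace (4 * (9 * (2 * INR m + 1) / (2 * (INR m + 3))) * Zm m)
    with (4 * (INR m + 1) * (2 * INR m + 1) / 9 * Zm m / (2 * (INR m + 1) * (INR m + 3) / 81))
    by (field; lra).
  apply Rle_div_r; [apply Rdiv_lt_0_compat; nra|]; lra.
Qed.

Lemma Zm_succ m : Zm (S m) = Zm_ratio m * Zm m.
Proof.
  set (u k := Zm k / Zm_ratio_prod k).
  assert (Hu : forall k, Zm k = u k * Zm_ratio_prod k).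
  { intros k; unfold u; pose proof (Zm_ratio_prod_pos k); field; lra. }
  enough (Hconst : forall k, u (S k) = u k) by (rewrite !Hu, Hconst; cbn; ring).
  apply constant_of_growth_le_4.
  - intros k; pose proof (Zm_pos k); pose proof (Zm_ratio_prod_pos k).
    apply Rlt_le, Rdiv_lt_0_compat; lra.
  - intros k; pose proof (Zm_succ_le k) as Hle; rewrite !Hu in Hle; cbn in Hle.
    pose proof (Zm_ratio_pos k); pose proof (Zm_ratio_prod_pos k).
    apply Rmult_le_reg_r with (Zm_ratio k * Zm_ratio_prod k); nra.
  - intros k; pose proof (Zm_recurrence k) as Hrec; rewrite !Hu in Hrec; cbn in Hrec.
    pose proof (pos_INR k); pose proof (Zm_ratio_prod_pos k).
    pose proof (Zm_ratio_pos k); pose proof (Zm_ratio_pos (S k)).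
    assert (Hprod : 0 < Zm_ratio (S k) * Zm_ratio k * Zm_ratio_prod k) by
      (apply Rmult_lt_0_compat; nra).
    apply Rmult_eq_reg_l with (Zm_ratio (S k) * Zm_ratio k * Zm_ratio_prod k); [|lra].
    unfold Zm_ratio in *; rewrite S_INR in *.
    apply Rminus_diag_uniq; rewrite <- Hrec; field; lra.
Qed.

Theorem proposition5p1 (m : nat) :
  ex_series (fun n => weight n m) /\
  ex_series (fun n => INR n * weight n m) /\
  Series (fun n => INR n * weight n m) / Zm m
    = INR ((m + 1) * (2 * m + 1)) / 3.
Proof.
  split; [apply ex_series_weight|split; [apply ex_series_INR_mul_weight|]].
  rewrite Series_INR_mul_weight, Zm_succ.
  pose proof (Zm_pos m); pose proof (pos_INR m).
  unfold Zm_ratio; rewrite mult_INR, !plus_INR, mult_INR; cbn [INR].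
  field; lra.
Qed.
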